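(* For finite $n$, if the Malthusian exponent $\Xi$ exists, then $\Xi<\lambda_{2,\max}^{-1}$.
   Context: $\sigma_1^2\ge\dots\ge\sigma_n^2\ge0$ are the eigenvalues of $\boldsymbol A\boldsymbol A^T$ for $\boldsymbol A\in\mathbb R^{n\times d}$; $\gamma>0$, $\zeta\in(0,1)$, $\Delta\in[0,1)$. For $j\in[n]$: $\Omega_j=1-\gamma\zeta\sigma_j^2+\Delta$, $\lambda_{2,j},\lambda_{3,j}=\frac{-2\Delta+\Omega_j^2\pm\sqrt{\Omega_j^2(\Omega_j^2-4\Delta)}}{2}$ (complex root if needed); $\lambda_{2,\max}=\max\{|\lambda_{2,j}|:\sigma_j^2>0\}$. $H_2(t)=\frac1n\sum_j\frac{2\sigma_j^4}{\Omega_j^2-4\Delta}\big(-\Delta^{t+1}+\frac12\lambda_{2,j}^{t+1}+\frac12\lambda_{3,j}^{t+1}\big)$ (by continuity when $\Omega_j^2=4\Delta$). The Malthusian exponent $\Xi$ is the unique solution of $\gamma^2\zeta(1-\zeta)\sum_{t=0}^\infty\Xi^tH_2(t)=1$, when such a solution exists. *)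

From mathcomp Require Import all_boot all_order all_algebra.
From mathcomp Require Import all_classical all_reals all_analysis.
From mathcomp Require Import complex.
Set Implicit Arguments. Unset Strict Implicit. Unset Printing Implicit Defensive.
Import Order.TTheory GRing.Theory Num.Theory.
Import numFieldNormedType.Exports.
Local Open Scope ring_scope.

Section Defs.
Variable R : realType.
Variables (n : nat) (sigma2 : 'I_n -> R) (gamma zeta Delta : R).

Definition Omega (j : 'I_n) : R := 1 - gamma * zeta * sigma2 j + Delta.

(* lambda_{2,j}, lambda_{3,j} : roots with + / - sign, in R[i];
   sqrtc is the principal complex square root (gives i*sqrt(-x) for x<0). *)
Definition lambda2 (j : 'I_n) : R[i] :=
  ((- (2 * Delta) + Omega j ^+ 2)%:C%C
     + sqrtc ((Omega j ^+ 2 * (Omega j ^+ 2 - 4 * Delta))%:C%C)) / 2%:R.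
Definition lambda3 (j : 'I_n) : R[i] :=
  ((- (2 * Delta) + Omega j ^+ 2)%:C%C
     - sqrtc ((Omega j ^+ 2 * (Omega j ^+ 2 - 4 * Delta))%:C%C)) / 2%:R.

Definition cmod (z : R[i]) : R := complex.Re `|z|.

Definition lambda2max : R :=
  \big[Num.max/0]_(j < n | 0 < sigma2 j) cmod (lambda2 j).

(* When
   Omega_j^2 = 4 Delta it is defined by continuity; the continuous extension
   of (-Delta^(t+1) + (lambda2^(t+1) + lambda3^(t+1))/2) / (Omega^2 - 4 Delta)
   at Omega^2 = 4 Delta equals (t+1)^2 Delta^t / 2. *)
Definition H2term (j : 'I_n) (t : nat) : R :=
  if Omega j ^+ 2 == 4 * Delta then
    2 * sigma2 j ^+ 2 * ((t.+1 ^ 2)%:R * Delta ^+ t / 2)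
  else
    complex.Re
      ((2 * sigma2 j ^+ 2 / (Omega j ^+ 2 - 4 * Delta))%:C%C
       * ((- Delta ^+ t.+1)%:C%C + lambda2 j ^+ t.+1 / 2%:R
          + lambda3 j ^+ t.+1 / 2%:R)).

Definition H2 (t : nat) : R := n%:R^-1 * \sum_(j < n) H2term j t.

Definition malthus_eq (Xi : R) : Prop :=
  cvgn ((series (fun t : nat => Xi ^+ t * H2 t) : R^nat)) /\
  gamma ^+ 2 * zeta * (1 - zeta) * limn ((series (fun t : nat => Xi ^+ t * H2 t) : R^nat)) = 1.

Definition malthusian_exponent (Xi : R) : Prop :=
  malthus_eq Xi /\ forall Xi' : R, malthus_eq Xi' -> Xi' = Xi.

End Defs.

(* Write lambda_{2,j} = m2^2 and lambda_{3,j} = m3^2, where m2, m3 are the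
   roots of X^2 - Omega_j X + Delta.  Then H_2(t) averages sigma_j^4 U_{t+1}^2
   for the Lucas sequence U of (Omega_j, Delta), and U_{t+1} - m3 U_t = m2^t
   gives |lambda_{2,j}|^t <= C (U_{t+1}^2 + U_t^2).  If Xi |lambda_{2,j}| >= 1
   for the j attaining lambda_{2,max}, the terms Xi^t H_2(t) of the series thus
   satisfy Xi^{t+1} H_2(t+1) + Xi (Xi^t H_2(t)) >= k > 0, so they do not tend to
   0 and the series diverges.  If lambda_{2,max} = 0 (so that its inverse is 0),
   then H_2(t) = 0 for t >= 1, so the Malthusian equation does not depend on Xi
   and cannot have a unique solution. *)

From mathcomp Require Import all_boot all_order all_algebra.
From mathcomp Require Import all_classical all_reals all_analysis.
From mathcomp Require Import complex ring lra.
Import Order.TTheory GRing.Theory Num.Theory.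
Import numFieldNormedType.Exports.
Local Open Scope ring_scope.
Local Open Scope complex_scope.
Set Implicit Arguments. Unset Strict Implicit. Unset Printing Implicit Defensive.

Fixpoint lucasU (R : pzRingType) (P Q : R) (t : nat) : R :=
  match t with
  | 0%N => 0
  | 1%N => 1
  | (t'.+1 as s).+1 => P * lucasU P Q s - Q * lucasU P Q t'
  end.

Lemma lucasUSS (R : pzRingType) (P Q : R) t :
  lucasU P Q t.+2 = P * lucasU P Q t.+1 - Q * lucasU P Q t.
Proof. by []. Qed.

Section Lucas.
Variables (R : comPzRingType) (P Q : R).
Local Notation U := (lucasU P Q).

Lemma lucasU_factor m2 m3 t : m2 + m3 = P -> m2 * m3 = Q ->
  U t.+1 - m3 * U t = m2 ^+ t.
Proof.
move=> hs hp; elim: t => [|t IH]; first by rewrite /= mulr0 subr0.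
by rewrite lucasUSS exprS -IH -hs -hp; ring.
Qed.

Lemma lucasU_binet m2 m3 t : m2 + m3 = P -> m2 * m3 = Q ->
  (m2 - m3) * U t = m2 ^+ t - m3 ^+ t.
Proof.
move=> hs hp; rewrite -(lucasU_factor t hs hp).
rewrite -(lucasU_factor t (m2 := m3) (m3 := m2)) ?(addrC m3) ?(mulrC m3) //.
ring.
Qed.

End Lucas.

Lemma lucasU_double_root (F : numFieldType) (P Q : F) t : P ^+ 2 = 4 * Q ->
  lucasU P Q t.+1 = t.+1%:R * (P / 2) ^+ t.
Proof.
move=> hPQ; have hs : P / 2 + P / 2 = P by field.
have hp : P / 2 * (P / 2) = Q by rewrite -expr2 expr_div_n hPQ; field.
elim: t => [|t IH]; first by rewrite /= mul1r.
have := lucasU_factor t.+1 hs hp; rewrite IH => /eqP; rewrite subr_eq => /eqP ->.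
by rewrite exprS -[t.+2%:R]natr1; ring.
Qed.

Lemma rmorph_lucasU (R S : pzRingType) (f : {rmorphism R -> S}) (P Q : R) t :
  f (lucasU P Q t) = lucasU (f P) (f Q) t.
Proof.
elim/ltn_ind: t => -[|[|t]] IH; rewrite ?rmorph0 ?rmorph1 //.
by rewrite !lucasUSS rmorphB !rmorphM !IH.
Qed.

Lemma sqr_roots_quadratic (F : numFieldType) (O D r s : F) :
  r ^+ 2 = O ^+ 2 - 4 * D -> s ^+ 2 = O ^+ 2 * (O ^+ 2 - 4 * D) ->
  exists m2 m3, [/\ m2 + m3 = O, m2 * m3 = D,
    m2 ^+ 2 = (- (2 * D) + O ^+ 2 + s) / 2 &
    m3 ^+ 2 = (- (2 * D) + O ^+ 2 - s) / 2].
Proof.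
move=> hr hs.
(* [s] is [O * r] up to the sign of [r]. *)
wlog {hs} -> : r hr / s = O * r.
  move=> wlog_s; have /eqP : s ^+ 2 = (O * r) ^+ 2 by rewrite hs exprMn hr.
  rewrite eqf_sqr => /orP[/eqP|/eqP] hsr; first exact: (wlog_s r).
  by apply: (wlog_s (- r)); rewrite ?sqrrN ?mulrN.
have {hr}-> : D = (O ^+ 2 - r ^+ 2) / 4 by rewrite hr; field.
by exists ((O + r) / 2), ((O - r) / 2); split; field.
Qed.

Section ComplexModulus.
Variable R : realType.

Lemma cmodE (z : R[i]) : (cmod z)%:C = `|z|.
Proof. by rewrite /cmod normc_def. Qed.

Lemma cmod_ge0 (z : R[i]) : 0 <= cmod z.
Proof. by rewrite /cmod normc_def sqrtr_ge0. Qed.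

Lemma cmod_eq0 (z : R[i]) : (cmod z == 0) = (z == 0).
Proof. by rewrite -[z == 0]normr_eq0 -cmodE eq_complex /= eqxx andbT. Qed.

Lemma cmodM (y z : R[i]) : cmod (y * z) = cmod y * cmod z.
Proof. by apply: complexI; rewrite rmorphM !cmodE normrM. Qed.

Lemma cmodX (z : R[i]) k : cmod (z ^+ k) = cmod z ^+ k.
Proof. by apply: complexI; rewrite rmorphXn !cmodE normrX. Qed.

Lemma cmod_real (x : R) : cmod x%:C = `|x|.
Proof. by rewrite /cmod normc_def /= expr0n addr0 sqrtr_sqr. Qed.

Lemma ler_cmodB (y z : R[i]) : cmod (y - z) <= cmod y + cmod z.
Proof. by rewrite -lecR rmorphD !cmodE ler_normB. Qed.

End ComplexModulus.

Lemma lucasU_lower_bound (R : realType) (P Q : R) (m2 m3 : R[i]) t :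
  m2 + m3 = P%:C -> m2 * m3 = Q%:C ->
  (cmod m2 ^+ 2) ^+ t <=
    (1 + cmod m3 ^+ 2) * (lucasU P Q t.+1 ^+ 2 + lucasU P Q t ^+ 2).
Proof.
move=> hs hp; set a := lucasU P Q t.+1; set b := lucasU P Q t.
have hab : cmod m2 ^+ t <= `|a| + cmod m3 * `|b|.
  rewrite -cmodX -(lucasU_factor t hs hp) -!rmorph_lucasU.
  by rewrite (le_trans (ler_cmodB _ _)) // cmodM !cmod_real.
have h0 : 0 <= cmod m2 ^+ t by rewrite exprn_ge0 ?cmod_ge0.
rewrite -exprM mulnC exprM -[a ^+ 2]real_normK ?num_real // -[b ^+ 2]real_normK ?num_real //.
apply: le_trans (_ : (`|a| + cmod m3 * `|b|) ^+ 2 <= _).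
  by rewrite ler_pXn2r // ?nnegrE // (le_trans h0 hab).
(* Cauchy--Schwarz *)
have := sqr_ge0 (cmod m3 * `|a| - `|b|); lra.
Qed.

Lemma shift_comb_ge_not_cvg0 (R : realType) (f : R^nat) (x k : R) :
  0 < k -> (forall t, k <= f t.+1 + x * f t) -> ~ (f @ \oo --> 0)%classic.
Proof.
move=> k0 lb f0.
have : ((fun t => f t.+1 + x * f t) @ \oo --> 0)%classic.
  rewrite -[0](addr0 0) -{2}(mulr0 x).
  by apply: cvgD; [rewrite cvg_shiftS | apply: cvgM => //; apply: cvg_cst].
move=> /cvgr_lt /(_ k k0) [N _ /(_ N (leqnn N))].
by rewrite ltNge lb.
Qed.

Section MalthusianModel.
Variables (R : realType) (n : nat) (sigma2 : 'I_n -> R) (gamma zeta Delta : R).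
Local Notation Om := (Omega sigma2 gamma zeta Delta).
Local Notation lam2 := (lambda2 sigma2 gamma zeta Delta).
Local Notation lam3 := (lambda3 sigma2 gamma zeta Delta).
Local Notation H2t := (H2term sigma2 gamma zeta Delta).
Hypothesis sigma2_ge0 : forall j, 0 <= sigma2 j.

Lemma lambda23_sqr_roots j : exists m2 m3 : R[i],
  [/\ m2 + m3 = (Om j)%:C, m2 * m3 = Delta%:C, m2 ^+ 2 = lam2 j & m3 ^+ 2 = lam3 j].
Proof.
pose rmorphE := (rmorphB, rmorphD, rmorphN, rmorphM, rmorphXn, rmorph_nat).
have hr : sqrtc (Om j ^+ 2 - 4 * Delta)%:C ^+ 2 = (Om j)%:C ^+ 2 - 4 * Delta%:C.
  by rewrite sqr_sqrtc !rmorphE.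
have hs : sqrtc (Om j ^+ 2 * (Om j ^+ 2 - 4 * Delta))%:C ^+ 2 =
    (Om j)%:C ^+ 2 * ((Om j)%:C ^+ 2 - 4 * Delta%:C).
  by rewrite sqr_sqrtc !rmorphE.
have [m2 [m3 [hsum hp h2 h3]]] := sqr_roots_quadratic hr hs.
by exists m2, m3; split; rewrite // ?h2 ?h3 /lambda2 /lambda3 !rmorphE.
Qed.

Lemma H2term_lucas j t :
  H2t j t = sigma2 j ^+ 2 * lucasU (Om j) Delta t.+1 ^+ 2.
Proof.
rewrite /H2term; case: eqP => [hdeg | /eqP hD].
  have hsq : (Om j / 2) ^+ 2 = Delta by rewrite expr_div_n hdeg; field.
  by rewrite (lucasU_double_root _ hdeg) exprMn -exprM mulnC exprM hsq natrX; field.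
have [m2 [m3 [hs hp <- <-]]] := lambda23_sqr_roots j.
have hb := lucasU_binet t.+1 hs hp; rewrite -rmorph_lucasU /= in hb.
set u := lucasU (Om j) Delta t.+1 in hb *.
have hd : (Om j ^+ 2 - 4 * Delta)%:C = (m2 - m3) ^+ 2.
  by rewrite rmorphB rmorphXn rmorphM rmorph_nat /= -hs -hp; ring.
have hd0 : m2 - m3 != 0.
  apply: contraNneq hD => d0; rewrite -subr_eq0; apply/eqP/complexI.
  by rewrite hd d0 expr0n rmorph0.
set s := sigma2 j ^+ 2.
suff -> : (2 * s / (Om j ^+ 2 - 4 * Delta))%:C *
    ((- Delta ^+ t.+1)%:C + m2 ^+ 2 ^+ t.+1 / 2 + m3 ^+ 2 ^+ t.+1 / 2) =
  (s * u ^+ 2)%:C by [].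
rewrite fmorph_div /= hd !(rmorphXn, rmorphM, rmorphN, rmorph_nat) /= -hp.
(* With [a = m2 ^+ t.+1] and [b = m3 ^+ t.+1], the bracket is [(a - b) ^+ 2 / 2]. *)
rewrite -!exprM !(mulnC 2) !exprM exprMn.
have -> : u%:C = (m2 ^+ t.+1 - m3 ^+ t.+1) / (m2 - m3) by rewrite -hb; field.
by field.
Qed.

Lemma cmod_lambda2_eq0 j : cmod (lam2 j) = 0 -> Om j = 0 /\ Delta = 0.
Proof.
have [m2 [m3 [_ hp h2 _]]] := lambda23_sqr_roots j.
move=> /eqP; rewrite -h2 cmodX expf_eq0 /= cmod_eq0 => /eqP m2_0.
have D0 : Delta = 0 by apply: complexI; rewrite -hp m2_0 mul0r.
split=> //; apply/eqP; rewrite -sqrf_eq0.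
have : (Om j ^+ 2)%:C == 0 :> R[i].
  rewrite (_ : 0 = m2 ^+ 2); last by rewrite m2_0 expr0n.
  (* [sqrtc] is the principal root, so [lambda2] is [Omega ^+ 2] (not 0) here. *)
  rewrite h2 /lambda2; move: (Om j) => O.
  rewrite D0 mulr0 oppr0 add0r mulr0 subr0 -expr2.
  rewrite sqrtc_sqrtr ?ler0c ?sqr_ge0 //= sqrtr_sqr ger0_norm ?sqr_ge0 //.
  by apply/eqP; rewrite rmorphXn /=; field.
by rewrite eq_complex /= eqxx andbT.
Qed.

Local Notation L := (lambda2max sigma2 gamma zeta Delta).
Local Notation H2s := (H2 sigma2 gamma zeta Delta).

Lemma cmod_lambda2_le_lambda2max j : 0 < sigma2 j -> cmod (lam2 j) <= L.
Proof. by move=> hj; rewrite /lambda2max (bigD1 j) //= le_max lexx. Qed.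

Lemma lambda2max_attained : L != 0 -> exists2 j, 0 < sigma2 j & L = cmod (lam2 j).
Proof.
rewrite /lambda2max; elim/big_rec: _ => [|j x hj IH]; first by rewrite eqxx.
by rewrite maxEle; case: ifP => _ hx; [exact: IH | exists j].
Qed.

Lemma H2term_le_H2 j t : H2t j t / n%:R <= H2s t.
Proof.
rewrite /H2 mulrC ler_wpM2l ?invr_ge0 ?ler0n // (bigD1 j) //= lerDl.
by apply: sumr_ge0 => i _; rewrite H2term_lucas mulr_ge0 ?sqr_ge0.
Qed.

Lemma H2_succ_eq0 : L = 0 -> forall t, H2s t.+1 = 0.
Proof.
move=> L0 t; rewrite /H2 big1 ?mulr0 // => i _; rewrite H2term_lucas.
have := sigma2_ge0 i; rewrite le_eqVlt => /orP[/eqP <- | si_gt0].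
  by rewrite expr0n mul0r.
have [-> ->] : Om i = 0 /\ Delta = 0.
  apply: cmod_lambda2_eq0; apply/le_anti.
  by rewrite cmod_ge0 -L0 cmod_lambda2_le_lambda2max.
by rewrite lucasUSS !mul0r subrr expr0n mulr0.
Qed.

Lemma malthusian_lambda2max_neq0 Xi :
  malthusian_exponent sigma2 gamma zeta Delta Xi -> L != 0.
Proof.
move=> [hXi Xi_uniq]; apply/eqP => L0.
(* [Xi + 1] would be another solution. *)
suff /Xi_uniq/eqP : malthus_eq sigma2 gamma zeta Delta (Xi + 1).
  by rewrite -subr_eq0 addrAC subrr add0r oner_eq0.
suff E : (fun t => (Xi + 1) ^+ t * H2s t) = (fun t => Xi ^+ t * H2s t).
  by rewrite /malthus_eq E.
by apply: funext => -[|t]; rewrite ?expr0 // H2_succ_eq0 // !mulr0.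
Qed.

Lemma malthus_terms_lower_bound j Xi : 0 < sigma2 j -> 1 <= Xi * cmod (lam2 j) ->
  exists2 k, 0 < k & forall t, k <= Xi ^+ t.+1 * H2s t.+1 + Xi * (Xi ^+ t * H2s t).
Proof.
move=> hj hXi; have [m2 [m3 [hs hp h2 _]]] := lambda23_sqr_roots j.
have Xi_ge0 : 0 <= Xi by have := cmod_ge0 (lam2 j); nra.
have n_gt0 : 0 < n%:R :> R by rewrite ltr0n (leq_ltn_trans _ (ltn_ord j)).
set C := 1 + cmod m3 ^+ 2.
have C_gt0 : 0 < C by rewrite ltr_pwDl ?sqr_ge0.
set k := sigma2 j ^+ 2 / n%:R / C.
have k_gt0 : 0 < k by rewrite !divr_gt0 ?exprn_gt0.
exists k => // t.
have := H2term_le_H2 j t; have := H2term_le_H2 j t.+1; rewrite !H2term_lucas.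
set A := lucasU _ _ t.+2 ^+ 2; set B := lucasU _ _ t.+1 ^+ 2 => hA hB.
have := lucasU_lower_bound t.+1 hs hp; rewrite -cmodX h2 -/C -/A -/B => hlb.
rewrite mulrA -exprS -mulrDr.
apply: le_trans (_ : k * (Xi * cmod (lam2 j)) ^+ t.+1 <= _).
  by apply: ler_peMr; [exact: ltW | exact: exprn_ege1].
rewrite exprMn mulrCA ler_wpM2l ?exprn_ge0 //.
apply: le_trans (_ : k * (C * (A + B)) <= _); first by rewrite ler_wpM2l // ltW.
have -> : k * (C * (A + B)) = sigma2 j ^+ 2 * A / n%:R + sigma2 j ^+ 2 * B / n%:R.
  by rewrite /k; field; rewrite ?gt_eqF.
exact: lerD.
Qed.

End MalthusianModel.

Theorem proposition14 (R : realType) (n d : nat) (A : 'M[R]_(n, d))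
  (sigma2 : 'I_n -> R) (gamma zeta Delta : R) :
  (* sigma_1^2 >= ... >= sigma_n^2 >= 0 are the eigenvalues of A A^T *)
  char_poly (A *m A^T) = \prod_(j < n) ('X - (sigma2 j)%:P) ->
  (forall i j : 'I_n, (i <= j)%N -> sigma2 j <= sigma2 i) ->
  (forall j : 'I_n, 0 <= sigma2 j) ->
  0 < gamma -> 0 < zeta < 1 -> 0 <= Delta < 1 ->
  forall Xi : R, malthusian_exponent sigma2 gamma zeta Delta Xi ->
  Xi < (lambda2max sigma2 gamma zeta Delta)^-1.
Proof.
move=> _ _ sigma2_ge0 _ _ _ Xi hXi.
have L_neq0 := malthusian_lambda2max_neq0 sigma2_ge0 hXi.
have [j hj L_eq] := lambda2max_attained L_neq0.
have L_gt0 : 0 < lambda2max sigma2 gamma zeta Delta.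
  by rewrite lt_def L_neq0 L_eq cmod_ge0.
rewrite ltNge; apply/negP => Xi_ge.
have := Xi_ge; rewrite -(ler_pM2r L_gt0) mulVf ?gt_eqF // L_eq => Xi_L_ge1.
have [k k_gt0 k_le] := malthus_terms_lower_bound hj Xi_L_ge1.
have [[series_cvg _] _] := hXi.
exact: shift_comb_ge_not_cvg0 k_gt0 k_le (cvg_series_cvg_0 series_cvg).
Qed.
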